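(* Consider the following idealized round-based model of Probabilistic Delta Debugging (ProbDD). A finite list $L$ of elements is to be minimized with respect to a property $\psi$ (a predicate on sublists of $L$, true on $L$). Every element $u$ of $L$ carries a probability $u.p$, and initially $u.p = p_0$ for all elements, for a fixed $p_0\in(0,1)$. The algorithm proceeds in rounds $r=1,2,\dots$. In each round a subset size $s$ is fixed, the current list $L$ is partitioned into subsets of size $s$, and each subset $S$ is attempted for deletion in turn: if $\psi(L\setminus S)$ holds, then $L$ is replaced by $L\setminus S$ (the elements of $S$ are removed); otherwise, the probability of each element $u\in S$ is updated to $$u.p \leftarrow \frac{u.p}{1-\prod_{v\in S}(1-v.p)}.$$ Suppose that in every round the number of elements of the current list $L$ is divisible by that round's subset size, so that every subset of the round has exactly $s$ elements. Then after each round, all elements remaining in $L$ have the same probability.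
   Context: In ProbDD, a round is a phase during which every remaining element has been attempted for deletion (as part of some subset) exactly once; the subset size is constant within a round. The probabilities are only modified by the update rule above, which is applied to the elements of a subset whose deletion failed to preserve $\psi$. *)

From HB Require Import structures.
From mathcomp Require Import all_boot all_order all_algebra.
Set Implicit Arguments. Unset Strict Implicit. Unset Printing Implicit Defensive.
Import Order.TTheory GRing.Theory Num.Theory.
Local Open Scope ring_scope.

Section ProbDD.
Variables (R : realFieldType) (T : eqType).

Definition state := (seq T * (T -> R))%type.

Definition remove_sub (L S : seq T) : seq T := [seq x <- L | x \notin S].

Definition attempt (psi : pred (seq T)) (st : state) (S : seq T) : state :=
  let: (L, p) := st in
  if psi (remove_sub L S) then (remove_sub L S, p)
  else (L, fun u => if u \in S
                    then p u / (1 - \prod_(v <- S) (1 - p v))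
                    else p u).

Definition round (psi : pred (seq T)) (st : state) (P : seq (seq T)) : state :=
  foldl (attempt psi) st P.

Definition size_partition (L : seq T) (s : nat) (P : seq (seq T)) : bool :=
  perm_eq (flatten P) L && all (fun S => size S == s) P.

End ProbDD.

(* Inductively, all remaining elements share one probability q at the start of
   a round.  Because the subsets of the round partition the list and all have
   size s, every failed attempt multiplies out to the same denominator
   1 - (1 - q)^s, so each element that survives the round (it lies in exactly
   one subset, and that subset's deletion failed) ends with probability
   q / (1 - (1 - q)^s), while elements not yet attempted still carry q. *)

From mathcomp Require Import all_boot all_order all_algebra.
Set Implicit Arguments. Unset Strict Implicit. Unset Printing Implicit Defensive.
Import Order.TTheory GRing.Theory Num.Theory.
Local Open Scope ring_scope.

Section Round.
Variables (R : realFieldType) (T : eqType) (psi : pred (seq T)).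

Definition updated_prob (q : R) (s : nat) : R := q / (1 - (1 - q) ^+ s).

Lemma prod_subr_const (p : T -> R) (q : R) (S : seq T) :
  {in S, forall v, p v = q} -> \prod_(v <- S) (1 - p v) = (1 - q) ^+ size S.
Proof.
elim: S => [|a S IH] pS; first by rewrite big_nil expr0.
rewrite big_cons IH ?pS ?mem_head ?exprS // => v vS.
by apply: pS; rewrite inE vS orbT.
Qed.

Lemma round_uniq (st : state R T) (Ps : seq (seq T)) :
  uniq st.1 -> uniq (round psi st Ps).1.
Proof.
rewrite /round; elim: Ps st => [|S Ps IH] [L p] //= uL.
by apply: IH; rewrite /attempt; case: ifP => _ //=; apply: filter_uniq.
Qed.

Lemma round_prob_updated (s : nat) (q : R) (Ps : seq (seq T)) (st : state R T) :
  uniq (flatten Ps) -> all (fun S => size S == s) Ps ->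
  {in flatten Ps, forall x, st.2 x = q} ->
  {in st.1, forall x, x \notin flatten Ps -> st.2 x = updated_prob q s} ->
  {in (round psi st Ps).1, forall x, (round psi st Ps).2 x = updated_prob q s}.
Proof.
rewrite /round; elim: Ps st => [|S Ps IH] [L p] /=.
  by move=> _ _ _ upd x xL; apply: upd.
rewrite cat_uniq => /and3P [_ disjS uPs] /andP [/eqP sizeS sizePs] pq upd.
have pPs : {in flatten Ps, forall x, p x = q}.
  by move=> x xPs; apply: pq; rewrite mem_cat xPs orbT.
rewrite /attempt; case: ifP => _; apply: IH => //= x.
- rewrite mem_filter => /andP [xS xL] xPs.
  by apply: upd; rewrite // mem_cat negb_or xS.
- move=> xPs; have xS : x \notin S.
    by apply: contraNN disjS => xS; apply/hasP; exists x.
  by rewrite (negbTE xS) pPs.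
- move=> xL xPs; case: ifP => xS; last by apply: upd; rewrite // mem_cat xS.
  rewrite (@prod_subr_const p q) => [|v vS]; last by rewrite pq // mem_cat vS.
  by rewrite sizeS pq // mem_cat xS.
Qed.

Lemma round_partition_prob (s : nat) (q : R) (Ps : seq (seq T)) (st : state R T) :
  uniq st.1 -> size_partition st.1 s Ps -> {in st.1, forall x, st.2 x = q} ->
  {in (round psi st Ps).1, forall x, (round psi st Ps).2 x = updated_prob q s}.
Proof.
move=> uL /andP [permL sizePs] pq.
apply: round_prob_updated => // [|x|x xL]; first by rewrite (perm_uniq permL).
  by rewrite (perm_mem permL); apply: pq.
by rewrite (perm_mem permL) xL.
Qed.

End Round.

Theorem lemma1 (R : realFieldType) (T : eqType) (psi : pred (seq T))
    (L0 : seq T) (p0 : R) (n : nat) (s : nat -> nat)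
    (P : nat -> seq (seq T)) (st : nat -> state R T) :
  uniq L0 -> psi L0 -> 0 < p0 < 1 ->
  st 0%N = (L0, fun _ => p0) ->
  (forall r, (r < n)%N ->
     [/\ (0 < s r)%N, (s r %| size (st r).1)%N,
         size_partition (st r).1 (s r) (P r)
       & st r.+1 = round psi (st r) (P r)]) ->
  forall r, (r <= n)%N ->
    {in (st r).1 &, forall u v, (st r).2 u = (st r).2 v}.
Proof.
(* Only uniqueness and the partition hypothesis matter: a zero denominator
   would give every surviving element the same junk value q / 0 = 0. *)
move=> uL0 _ _ st0 stS.
suff inv r : (r <= n)%N ->
    uniq (st r).1 /\ exists q, {in (st r).1, forall x, (st r).2 x = q}.
  by move=> r /inv [_ [q pq]] u v uL vL; rewrite !pq.
elim: r => [|r IH] rn; first by rewrite st0; split => //; exists p0.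
have [uL [q pq]] := IH (ltnW rn).
have [_ _ partP ->] := stS r rn.
split; first exact: round_uniq.
by exists (updated_prob q (s r)); exact: round_partition_prob.
Qed.
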